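(* Let $G=(V,E)$ be a tree, let $S_0=\{r\}$, let $u\in V\setminus\{r\}$, and let $\tau$ be the first round after which $u$ is informed. Let $p_{r,u}$ be the set of nodes on the unique path from $r$ to $u$ (including $r$ and $u$) and $D_{p_{r,u}}=\sum_{w\in p_{r,u}} d_w$, where $d_w$ is the degree of $w$. Then: (1) for \textsc{Pull}, $\mathbb{E}[\tau]=\Theta(D_{p_{r,u}}-d_r)$; (2) for every type of \textsc{RPull} (adversarial or random), $\mathbb{E}[\tau]=\Omega(D_{p_{r,u}}-d_r)$; (3) for adversarial \textsc{RPull}, $\mathbb{E}[\tau]=O(D_{p_{r,u}})$.
   Context: Rumor spreading proceeds in synchronous rounds. \textsc{Pull}: in each round, every uninformed node contacts a uniformly random neighbor and learns the rumor if that neighbor is informed (an informed node may serve arbitrarily many requests). \textsc{RPull}: in each round, every uninformed node sends a request to a uniformly random neighbor; every informed node $v$ receiving a nonempty set $R_v$ of requests selects exactly one node of $R_v$, which learns the rumor. In adversarial \textsc{RPull} the selected node is chosen by an adaptive adversary; in random \textsc{RPull} it is chosen uniformly at random, independently. *)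

From HB Require Import structures.
From mathcomp Require Import all_boot all_order all_algebra.
From mathcomp Require Import all_classical all_reals all_analysis.
Set Implicit Arguments. Unset Strict Implicit. Unset Printing Implicit Defensive.
Import Order.TTheory GRing.Theory Num.Theory.
Local Open Scope ring_scope.

Definition simple_graph (T : finType) (e : rel T) : Prop :=
  symmetric e /\ irreflexive e.

Definition acyclic (T : finType) (e : rel T) : Prop :=
  forall s : seq T, uniq s -> (3 <= size s)%N -> ~~ cycle e s.

Definition connected (T : finType) (e : rel T) : Prop :=
  forall x y : T, connect e x y.

Definition is_tree (T : finType) (e : rel T) : Prop :=
  [/\ simple_graph e, connected e & acyclic e].

Definition simple_path (T : finType) (e : rel T) (r : T) (s : seq T) (u : T) : Prop :=
  [/\ path e r s, last r s = u & uniq (r :: s)].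

Definition deg (T : finType) (e : rel T) (w : T) : nat := #|[set x | e w x]|.

Definition Dpath (T : finType) (e : rel T) (r : T) (s : seq T) : nat :=
  (\sum_(w <- r :: s) deg e w)%N.

(* Randomness of one round: every node v picks c v.  Uninformed nodes
   (v \notin S) pick a uniformly random neighbour; informed nodes make no
   choice (encoded as c v = v, with probability 1). *)
Definition wt (R : realType) (T : finType) (e : rel T) (S : {set T})
  (c : {ffun T -> T}) : R :=
  \prod_(v : T) (if v \in S then (c v == v)%:R
                 else (e v (c v))%:R / (deg e v)%:R).

Definition pull_step (T : finType) (S : {set T}) (c : {ffun T -> T}) : {set T} :=
  S :|: [set v | (v \notin S) && (c v \in S)].

Definition req (T : finType) (S : {set T}) (c : {ffun T -> T}) (w : T) : {set T} :=
  [set v | (v \notin S) && (c v == w)].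

Definition rpull_step (T : finType) (S : {set T}) (c s : {ffun T -> T}) : {set T} :=
  S :|: [set s w | w in [set w in S | (0 < #|req S c w|)%N]].

Definition selwt (R : realType) (T : finType) (S : {set T}) (c s : {ffun T -> T}) : R :=
  \prod_(w : T) (if (w \in S) && ((0 < #|req S c w|)%N)
                 then (s w \in req S c w)%:R / #|req S c w|%:R
                 else (s w == w)%:R).

(* Adversarial RPULL: an adaptive (deterministic) adversary sees the whole
   history of random choices (which determines the whole past of the
   process, since its own past selections are functions of it) including the
   current round's requests, and outputs a selection; an invalid selection
   at w is replaced by some element of R_w, so that every adversary is valid
   and every valid adversary arises. *)
Definition adversary (T : finType) := seq {ffun T -> T} -> {ffun T -> T}.

Definition adv_sel (T : finType) (S : {set T}) (c s : {ffun T -> T}) : {ffun T -> T} :=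
  [ffun w => if s w \in req S c w then s w else odflt w [pick v in req S c w]].

(* P(u is not informed after t more rounds | current informed set S) *)
Fixpoint pull_surv (R : realType) (T : finType) (e : rel T) (u : T)
  (t : nat) (S : {set T}) : R :=
  match t with
  | 0 => (u \notin S)%:R
  | t'.+1 => \sum_(c : {ffun T -> T}) wt R e S c * pull_surv R e u t' (pull_step S c)
  end.

Fixpoint rrpull_surv (R : realType) (T : finType) (e : rel T) (u : T)
  (t : nat) (S : {set T}) : R :=
  match t with
  | 0 => (u \notin S)%:R
  | t'.+1 => \sum_(c : {ffun T -> T}) \sum_(s : {ffun T -> T})
               wt R e S c * selwt R S c s * rrpull_surv R e u t' (rpull_step S c s)
  end.

Fixpoint arpull_surv (R : realType) (T : finType) (e : rel T) (u : T)
  (A : adversary T) (t : nat) (h : seq {ffun T -> T}) (S : {set T}) : R :=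
  match t with
  | 0 => (u \notin S)%:R
  | t'.+1 => \sum_(c : {ffun T -> T})
      wt R e S c * arpull_surv R e u A t' (rcons h c)
                     (rpull_step S c (adv_sel S c (A (rcons h c))))
  end.

(* E[tau] = sum_{t >= 0} P(tau > t) = sum_t P(u not informed after round t),
   started from S_0 = {r}. *)
Definition ET (R : realType) (f : nat -> R) : \bar R :=
  (\sum_(0 <= t <oo) (f t)%:E)%E.

Definition E_pull (R : realType) (T : finType) (e : rel T) (r u : T) : \bar R :=
  ET (fun t => pull_surv R e u t [set r]).
Definition E_rrpull (R : realType) (T : finType) (e : rel T) (r u : T) : \bar R :=
  ET (fun t => rrpull_surv R e u t [set r]).
Definition E_arpull (R : realType) (T : finType) (e : rel T) (r u : T)
  (A : adversary T) : \bar R :=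
  ET (fun t => arpull_surv R e u A t [::] [set r]).

From HB Require Import structures.
From mathcomp Require Import all_boot all_order all_algebra.
From mathcomp Require Import all_classical all_reals all_analysis.
From mathcomp Require Import zify ring lra.
Import Order.TTheory GRing.Theory Num.Theory.

Set Implicit Arguments.
Unset Strict Implicit.
Unset Printing Implicit Defensive.

(* Let r = v 0, ..., v k = u be the path. Every informed node learned the
   rumour from an informed neighbour, so the informed path nodes form a
   prefix v 0, ..., v j.-1, and nothing in the subtree hanging from v j.-1
   through the frontier node v j is informed. Progress along the path thus
   happens only when v j contacts its parent, which under Pull has
   probability 1 / deg (v j). The potential summing deg over the uninformed
   path nodes therefore drops by exactly one per round in expectation under
   Pull and by at most one under any RPull; a general drift argument for
   survival times turns this into the bounds Theta(D_p - d_r) and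
   Omega(D_p - d_r). Under adversarial RPull the selection at v j.-1 can
   only be diverted to another requester, an uninformed neighbour of
   v j.-1 off the path, which then gets informed; adding these neighbours to
   the potential restores a unit expected drop, and the potential starts
   below 2 D_p. *)

Local Open Scope ring_scope.

Lemma ET_ge_partial_sum (R : realType) (f : nat -> R) N :
  (forall t, 0 <= f t) -> ((\sum_(t < N) f t)%:E <= ET f)%E.
Proof.
move=> f0; rewrite /ET.
have := @nneseries_lim_ge R (fun t => (f t)%:E) xpredT 0 N.
rewrite -sumEFin big_mkord; apply => n _ _; rewrite lee_fin; exact: f0.
Qed.

Lemma ET_le_bound (R : realType) (f : nat -> R) M :
  (forall t, 0 <= f t) -> (forall N, \sum_(t < N) f t <= M) -> (ET f <= M%:E)%E.
Proof.
move=> f0 fM; rewrite /ET.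
apply: (lime_le (is_cvg_nneseries _)) => [n _ _|]; first by rewrite lee_fin.
apply: nearW => k; rewrite sumEFin lee_fin big_mkord; exact: fM.
Qed.

Lemma ler_avg (R : numDomainType) (I : finType) (mu f : I -> R) a :
  (forall i, 0 <= mu i) -> \sum_i mu i = 1 ->
  (forall i, mu i != 0 -> a <= f i) -> a <= \sum_i mu i * f i.
Proof.
move=> m0 m1 H; rewrite -[a]mul1r -m1 mulr_suml; apply: ler_sum => i _.
have [->|nz] := eqVneq (mu i) 0; first by rewrite !mul0r.
by rewrite ler_wpM2l // H.
Qed.

Lemma avg_ler (R : numDomainType) (I : finType) (mu f : I -> R) a :
  (forall i, 0 <= mu i) -> \sum_i mu i = 1 ->
  (forall i, mu i != 0 -> f i <= a) -> \sum_i mu i * f i <= a.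
Proof.
move=> m0 m1 H; rewrite -[a]mul1r -m1 mulr_suml; apply: ler_sum => i _.
have [->|nz] := eqVneq (mu i) 0; first by rewrite !mul0r.
by rewrite ler_wpM2l // H.
Qed.

(** * Survival functions of finite-branching Markov chains *)

Section SurvivalChain.
Variables (R : realType) (X : Type) (I : finType) (mu : X -> I -> R)
  (step : X -> I -> X) (alive : X -> bool) (inv : X -> Prop).

Fixpoint surv (t : nat) (x : X) : R :=
  match t with
  | 0 => (alive x)%:R
  | t'.+1 => \sum_i mu x i * surv t' (step x i)
  end.

Definition surv_sum N x := \sum_(t < N) surv t x.

Hypothesis mu_ge0 : forall x i, 0 <= mu x i.
Hypothesis mu_sum1 : forall x, inv x -> \sum_i mu x i = 1.
Hypothesis inv_step : forall x i, inv x -> mu x i != 0 -> inv (step x i).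
Hypothesis alive_step : forall x i, inv x -> mu x i != 0 -> alive (step x i) -> alive x.

Lemma surv_ge0 t x : 0 <= surv t x.
Proof.
elim: t x => [|t IH] x /=; first by rewrite ler0n.
by apply: sumr_ge0 => i _; rewrite mulr_ge0.
Qed.

Lemma surv_sum_ge0 N x : 0 <= surv_sum N x.
Proof. by apply: sumr_ge0 => t _; apply: surv_ge0. Qed.

Lemma surv_dead t x : inv x -> ~~ alive x -> surv t x = 0.
Proof.
elim: t x => [|t IH] x Ix dx /=; first by rewrite (negbTE dx).
apply: big1 => i _; have [->|nz] := eqVneq (mu x i) 0; first by rewrite mul0r.
rewrite IH ?mulr0 //; first exact: inv_step.
by apply: contra dx; apply: alive_step.
Qed.

Lemma surv_le1 t x : inv x -> surv t x <= 1.
Proof.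
elim: t x => [|t IH] x Ix /=; first by case: (alive x).
apply: avg_ler => // [|i nz]; first exact: mu_sum1.
by apply/IH/inv_step.
Qed.

Lemma survS_le t x : inv x -> surv t.+1 x <= surv t x.
Proof.
elim: t x => [|t IH] x Ix.
  case ax: (alive x); first by rewrite /= ax; apply: (surv_le1 1).
  by rewrite (surv_dead 1 Ix) ?ax.
apply: ler_sum => i _; have [->|nz] := eqVneq (mu x i) 0; first by rewrite !mul0r.
by rewrite ler_wpM2l // IH //; apply: inv_step.
Qed.

Lemma surv_nonincreasing m n x : inv x -> (m <= n)%N -> surv n x <= surv m x.
Proof.
move=> Ix /subnK <-; elim: (n - m)%N => [|d IH] //.
by rewrite addSn; apply: le_trans (survS_le _ Ix) IH.
Qed.

Lemma surv_sumS N x : surv_sum N.+1 x = (alive x)%:R + \sum_i mu x i * surv_sum N (step x i).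
Proof.
rewrite /surv_sum big_ord_recl /=; congr (_ + _).
rewrite exchange_big /=; apply: eq_bigr => i _; rewrite mulr_sumr.
by apply: eq_bigr => t _; rewrite add0n.
Qed.

Lemma surv_sum_le_potential (Phi : X -> R) :
  (forall x, inv x -> 0 <= Phi x) ->
  (forall x, inv x -> alive x -> 1 + \sum_i mu x i * Phi (step x i) <= Phi x) ->
  forall N x, inv x -> surv_sum N x <= Phi x.
Proof.
move=> Phi0 drift; elim=> [|N IH] x Ix; first by rewrite /surv_sum big_ord0 Phi0.
case ax: (alive x); last first.
  by rewrite /surv_sum big1 ?Phi0 // => t _; rewrite surv_dead ?ax.
rewrite surv_sumS ax; apply: le_trans (drift _ Ix ax); rewrite lerD2l.
apply: ler_sum => i _; have [->|nz] := eqVneq (mu x i) 0; first by rewrite !mul0r.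
by rewrite ler_wpM2l // IH //; apply: inv_step.
Qed.

(* Induction on N gives Psi x <= surv_sum N x + C * surv N x; at N = C + 1
   the last term is at most surv_sum N x because surv is nonincreasing. *)
Lemma potential_le_surv_sum (Psi : X -> R) (C : nat) :
  (forall x, inv x -> Psi x <= C%:R * (alive x)%:R) ->
  (forall x, inv x -> alive x -> Psi x <= 1 + \sum_i mu x i * Psi (step x i)) ->
  forall x, inv x -> Psi x <= 2 * surv_sum C.+1 x.
Proof.
move=> PsiC drift.
have key N x : inv x -> Psi x <= surv_sum N x + C%:R * surv N x.
  elim: N x => [|N IH] x Ix; first by rewrite /surv_sum big_ord0 add0r PsiC.
  case ax: (alive x); last first.
    apply: le_trans (PsiC _ Ix) _; rewrite ax mulr0.
    by rewrite addr_ge0 ?mulr_ge0 ?surv_sum_ge0 ?surv_ge0.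
  rewrite surv_sumS /= ax mulr_sumr -addrA -big_split /=.
  apply: le_trans (drift _ Ix ax) _; rewrite lerD2l; apply: ler_sum => i _.
  rewrite (mulrCA C%:R) -mulrDr; have [->|nz] := eqVneq (mu x i) 0; first by rewrite !mul0r.
  by rewrite ler_wpM2l // IH //; apply: inv_step.
move=> x Ix; apply: le_trans (key C.+1 x Ix) _.
rewrite mulr2n mulrDl mul1r lerD2l.
apply: (@le_trans _ _ (C.+1%:R * surv C.+1 x)).
  by rewrite ler_wpM2r ?surv_ge0 // ler_nat.
have -> : C.+1%:R * surv C.+1 x = \sum_(t < C.+1) surv C.+1 x.
  by rewrite sumr_const card_ord mulr_natl.
apply: ler_sum => t _; apply: surv_nonincreasing => //.
exact: ltnW.
Qed.

End SurvivalChain.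

(** * Paths and branches in a tree *)

Definition avoid (T : finType) (e : rel T) (z : T) : rel T :=
  [rel x y | e x y && (x != z) && (y != z)].

Section Avoid.
Variables (T : finType) (e : rel T) (z : T).

Lemma avoid_path_neq a q : path (avoid e z) a q -> forall y, y \in q -> y != z.
Proof.
elim: q a => [|b q IH] a //= /andP[/andP[/andP[_ _] bz] pq] y.
by rewrite inE => /orP[/eqP->//|]; apply: IH pq y.
Qed.

Lemma connect_avoid_neq a x : connect (avoid e z) a x -> a != z -> x != z.
Proof.
move=> /connectP[q pq ->] az; case: (lastP q) pq => [//|q' b] pq.
by rewrite last_rcons; apply: (avoid_path_neq pq); rewrite mem_rcons inE eqxx.
Qed.

Lemma connect_avoid_edge a x y :
  connect (avoid e z) a x -> a != z -> e x y -> y != z -> connect (avoid e z) a y.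
Proof.
move=> cx az exy yz; apply: (connect_trans cx); apply: connect1.
by rewrite /avoid /= exy yz (connect_avoid_neq cx az).
Qed.

(* Otherwise z, a and a shortest avoiding path from a to x close a cycle. *)
Lemma acyclic_connect_avoid a x :
  acyclic e -> connect (avoid e z) a x -> a != z -> e z a -> e x z -> x = a.
Proof.
move=> ac /connectP[q pq ->] az eza.
case: (shortenP pq) => q' pq' uq' _ exz; apply/eqP/negPn/negP => xa.
have zq : z \notin q' by apply/negP => /(avoid_path_neq pq'); rewrite eqxx.
have uzq : uniq [:: z, a & q'] by rewrite cons_uniq uq' andbT inE negb_or eq_sym az zq.
have size_zq : (3 <= size [:: z, a & q'])%N.
  by case: q' {pq' uq' zq uzq} exz xa => [|b q'] //= _; rewrite eqxx.
move: (ac _ uzq size_zq); apply/negP/negPn.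
rewrite /cycle /= rcons_path eza exz andbT.
by apply: sub_path pq' => x1 y1 /andP[/andP[]].
Qed.

End Avoid.

Definition contacts_nbrs (T : finType) (e : rel T) (S : {set T}) (c : {ffun T -> T}) :=
  forall x, x \notin S -> e x (c x).

Definition grows_via (T : finType) (S : {set T}) (c : {ffun T -> T}) (S' : {set T}) :=
  {subset S <= S'} /\ forall x, x \in S' -> x \notin S -> c x \in S.

Section TreePath.
Variables (T : finType) (e : rel T) (r u : T) (s : seq T).
Hypotheses (tree_e : is_tree e) (path_ru : simple_path e r s u).

Local Notation k := (size s).

Definition pathv (i : nat) : T := nth r (r :: s) i.

Local Notation v := pathv.

Lemma tree_sym : symmetric e. Proof. by case: tree_e => [[]]. Qed.

Lemma pathv_last : v k = u.
Proof. by case: path_ru => _ <- _; rewrite /pathv (nth_last r (r :: s)). Qed.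

Lemma pathv_edge i : (i < k)%N -> e (v i) (v i.+1).
Proof. by case: path_ru => /(pathP r) H _ _ /H. Qed.

Lemma pathv_edge_pred i : (0 < i <= k)%N -> e (v i.-1) (v i).
Proof. by case/andP=> i0 ik; have := pathv_edge (i := i.-1); rewrite prednK //; apply; lia. Qed.

Lemma pathv_inj i j : (i <= k)%N -> (j <= k)%N -> v i = v j -> i = j.
Proof. by case: path_ru => _ _ uq hi hj /eqP; rewrite nth_uniq //= ?ltnS // => /eqP. Qed.

Lemma pathv_neq i j : (i <= k)%N -> (j <= k)%N -> i != j -> v i != v j.
Proof. by move=> hi hj; apply: contra => /eqP /(pathv_inj hi hj) ->. Qed.

Lemma deg_gt0 x : u != r -> (0 < deg e x)%N.
Proof.
move=> ur; case: tree_e => _ conn _.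
have [z xz] : exists2 z, x != z & connect e x z.
  case: (eqVneq x r) => [->|xr]; first by exists u; [rewrite eq_sym | apply: conn].
  by exists r => //; apply: conn.
case/connectP=> [[|y q]] /= pq zl; first by move: xz; rewrite zl eqxx.
case/andP: pq => exy _; rewrite /deg card_gt0; apply/set0Pn; exists y; by rewrite inE.
Qed.

(* The subtree hanging from v i.-1 through v i. *)
Definition branch (i : nat) : {set T} := [set x | connect (avoid e (v i.-1)) (v i) x].

Lemma pathv_neq_pred i : (0 < i <= k)%N -> v i != v i.-1.
Proof. by case/andP=> i0 ik; apply: pathv_neq => //; [lia | apply/eqP; lia]. Qed.

Lemma pathv_in_branch i l : (0 < i <= k)%N -> (i <= l <= k)%N -> v l \in branch i.
Proof.
move=> hi /andP[il lk]; rewrite inE.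
elim: l il lk => [|l IH] il lk; first by case/andP: hi; rewrite leqn0 in il; rewrite (eqP il).
case: (ltngtP i l.+1) il => // [il _|-> _]; last exact: connect0.
apply: connect_avoid_edge (IH il (ltnW lk)) (pathv_neq_pred hi) (pathv_edge lk) _.
by case/andP: hi => i0 ik; apply: pathv_neq; lia.
Qed.

Lemma branch_exit i x y :
  (0 < i <= k)%N -> x \in branch i -> e x y -> y \notin branch i -> y = v i.-1.
Proof.
move=> hi; rewrite !inE => cx exy yT; apply/eqP/negPn/negP => yz.
by move: yT; rewrite (connect_avoid_edge cx (pathv_neq_pred hi) exy yz).
Qed.

Lemma branch_root i x : (0 < i <= k)%N -> x \in branch i -> e x (v i.-1) -> x = v i.
Proof.
case: tree_e => _ _ ac hi; rewrite inE => cx.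
exact: (acyclic_connect_avoid ac cx (pathv_neq_pred hi) (pathv_edge_pred hi)).
Qed.

(* Walking down the path from v i.-1, the branch could only be re-entered
   through the edge between v i.-1 and v i. *)
Lemma pathv_notin_branch i l : (0 < i <= k)%N -> (l < i)%N -> v l \notin branch i.
Proof.
move=> hi; have [i0 ik] := andP hi.
suff down d : (d < i)%N -> v (i.-1 - d) \notin branch i.
  by move=> li; have := down (i.-1 - l)%N; rewrite subKn ?leq_subr; lia.
elim: d => [|d IH] di.
  by rewrite subn0 inE; apply/negP => /connect_avoid_neq/(_ (pathv_neq_pred hi)); rewrite eqxx.
have lS : (i.-1 - d.+1).+1 = (i.-1 - d)%N by lia.
apply/negP => inb.
have edge := pathv_edge (i := i.-1 - d.+1); rewrite lS in edge.
have /pathv_inj top := branch_exit hi inb (edge ltac:(lia)) (IH (ltnW di)).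
have d0 : d = 0%N by have := top ltac:(lia) ltac:(lia); lia.
move: inb edge; rewrite d0 subn0 => inb /(_ ltac:(lia)) /(branch_root hi inb).
by move/pathv_inj; lia.
Qed.

Definition path_inv (S : {set T}) : Prop :=
  r \in S /\ forall i, (0 < i <= k)%N -> v i \notin S -> forall x, x \in branch i -> x \notin S.

Definition frontier (S : {set T}) (j : nat) :=
  (0 < j <= k)%N /\ forall i, (i <= k)%N -> (v i \in S) = (i < j)%N.

Lemma path_inv_init : path_inv [set r].
Proof.
split=> [|i hi _ x]; first by rewrite inE.
by rewrite inE; apply: contraL => /eqP ->; apply: (pathv_notin_branch (l := 0)); lia.
Qed.

(* Branch i is attached to the rest of the tree only through v i, so no node
   of it can be informed before v i. *)
Lemma path_inv_step S c S' :
  path_inv S -> contacts_nbrs e S c -> grows_via S c S' -> path_inv S'.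
Proof.
move=> [rS IS] cv [sub newS]; split; first exact: sub.
move=> i hi viS' x xb; apply/negP => xS'.
have viS : v i \notin S by apply: contra viS'; apply: sub.
have xS : x \notin S by apply: IS xb.
have cb : c x \notin branch i by apply: contraL (newS x xS' xS); apply: IS.
have := branch_root hi xb; rewrite -(branch_exit hi xb (cv x xS) cb).
by move=> /(_ (cv x xS)) xv; move: viS'; rewrite -xv xS'.
Qed.

Lemma exists_frontier S : path_inv S -> u \notin S -> exists j, frontier S j.
Proof.
move=> [rS IS] uS.
have hs : has [predC S] (r :: s).
  by apply/hasP; exists u => //; rewrite -pathv_last mem_nth.
pose j := find [predC S] (r :: s).
have jk : (j <= k)%N by rewrite -ltnS -[k.+1]/(size (r :: s)) -has_find.
have jS : v j \notin S := nth_find r hs.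
have j0 : (0 < j)%N by case: (posnP j) jS => // ->; rewrite /pathv /= rS.
exists j; split=> [|i ik]; first by rewrite j0.
case: (ltnP i j) => ij; first by have := before_find r ij => /negbFE.
apply: contraNF (IS j ltac:(lia) jS (v i) _) => //.
by apply: pathv_in_branch; lia.
Qed.

Lemma frontier_step S c S' j : path_inv S -> contacts_nbrs e S c -> grows_via S c S' ->
  frontier S j ->
  (forall i, (i <= k)%N -> i != j -> (v i \in S') = (v i \in S)) /\
  (v j \in S' -> c (v j) = v j.-1).
Proof.
move=> [rS IS] cv [sub newS] [hj fr].
have jS : v j \notin S by rewrite fr ?ltnn; lia.
have via_pred x : x \in branch j -> x \in S' -> x \notin S -> c x = v j.-1.
  move=> xb xS' xS; have cS := newS x xS' xS.
  have cb : c x \notin branch j by apply: contraL cS; apply: IS.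
  exact: branch_exit hj xb (cv x xS) cb.
split=> [i ik ij|jS']; last by apply: via_pred jS' jS; apply: pathv_in_branch; lia.
case: (ltnP i j) => lij; first by have := fr i ik; rewrite lij => iS; rewrite iS sub.
have iS : v i \notin S by rewrite fr // ltnNge lij.
rewrite (negbTE iS); apply/negP => iS'.
have ib : v i \in branch j by apply: pathv_in_branch; lia.
have := branch_root hj ib; rewrite -(via_pred _ ib iS' iS) => /(_ (cv _ iS)).
by move/pathv_inj; move: ij; lia.
Qed.

Lemma path_inv_informed S : path_inv S -> u \in S -> forall i, (0 < i <= k)%N -> v i \in S.
Proof.
move=> [rS IS] uS i hi; apply/negPn/negP => iS.
have ub : u \in branch i by rewrite -pathv_last; apply: pathv_in_branch; lia.
by move: (IS i hi iS u ub); rewrite uS.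
Qed.

Lemma frontier_pred_in S j : frontier S j -> v j.-1 \in S.
Proof. by case=> hj fr; rewrite fr; lia. Qed.

Lemma frontier_notin S j : frontier S j -> v j \notin S.
Proof. by case=> hj fr; rewrite fr ?ltnn //; lia. Qed.

Lemma frontier_edge S j : frontier S j -> e (v j) (v j.-1).
Proof. by case=> hj _; rewrite tree_sym; apply: pathv_edge_pred. Qed.

End TreePath.

(** * The distribution of one round *)

Lemma sum_indicator (R : nzSemiRingType) (T : finType) (A : {set T}) :
  \sum_y (y \in A)%:R = #|A|%:R :> R.
Proof.
rewrite (bigID (mem A)) /= [X in _ + X]big1 ?addr0; last by move=> y /negbTE ->.
by rewrite (eq_bigr (fun _ => 1)) ?sumr_const // => y ->.
Qed.

Lemma prod_indicator (R : comNzSemiRingType) (T : finType) (P : pred T) :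
  \prod_x (P x)%:R = [forall x, P x]%:R :> R.
Proof.
case: (boolP [forall x, P x]) => [/forallP H|/forallPn[x Px]].
  by rewrite big1 // => x _; rewrite H.
by rewrite (bigD1 x) //= (negbTE Px) mul0r.
Qed.

Section Round.
Variables (R : realType) (T : finType) (e : rel T).
Hypothesis deg_pos : forall x, (0 < deg e x)%N.

(* wt is the product of these independent per-node contact laws. *)
Definition contact_wt (S : {set T}) v y : R :=
  if v \in S then (y == v)%:R else (e v y)%:R / (deg e v)%:R.

Lemma contact_wt_ge0 S v y : 0 <= contact_wt S v y.
Proof. by rewrite /contact_wt; case: ifP. Qed.

Lemma contact_wt_sum1 S v : \sum_y contact_wt S v y = 1.
Proof.
rewrite /contact_wt; case: (v \in S).
  by rewrite (bigD1 v) //= eqxx big1 ?addr0 // => y /negbTE ->.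
rewrite -mulr_suml (eq_bigr (fun y => (y \in [set x | e v x])%:R)) => [|y _]; last by rewrite inE.
by rewrite sum_indicator divff // pnatr_eq0 -lt0n; apply: deg_pos.
Qed.

Lemma contact_wt_edge (S : {set T}) v w : v \notin S -> e v w -> contact_wt S v w = (deg e v)%:R^-1.
Proof. by rewrite /contact_wt => /negbTE -> ->; rewrite mul1r. Qed.

Lemma sum_wt_prod S (h : T -> T -> R) :
  \sum_c wt R e S c * \prod_v h v (c v) = \prod_v \sum_y contact_wt S v y * h v y.
Proof. by rewrite bigA_distr_bigA; apply: eq_bigr => c _; rewrite /wt -big_split. Qed.

Lemma sum_wt_forall S (P : T -> T -> bool) :
  \sum_c wt R e S c * [forall v, P v (c v)]%:R =
  \prod_v \sum_y contact_wt S v y * (P v y)%:R.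
Proof. by rewrite -sum_wt_prod; apply: eq_bigr => c _; rewrite prod_indicator. Qed.

Lemma wt_ge0 S c : 0 <= wt R e S c.
Proof. by apply: prodr_ge0 => v _; apply: contact_wt_ge0. Qed.

Lemma wt_sum1 S : \sum_c wt R e S c = 1.
Proof.
have <- : \prod_(v : T) \sum_y contact_wt S v y * 1 = 1.
  by apply: big1 => v _; under eq_bigr do rewrite mulr1; apply: contact_wt_sum1.
rewrite -sum_wt_prod; apply: eq_bigr => c _.
by rewrite big1_eq mulr1.
Qed.

Lemma sum_wt_marginal S v0 (phi : T -> R) :
  \sum_c wt R e S c * phi (c v0) = \sum_y contact_wt S v0 y * phi y.
Proof.
pose h v y := if v == v0 then phi y else 1.
have hE (c : {ffun T -> T}) : \prod_v h v (c v) = phi (c v0).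
  by rewrite (bigD1 v0) //= /h eqxx big1 ?mulr1 // => v /negbTE ->.
have sum_hE v : v != v0 -> \sum_y contact_wt S v y * h v y = 1.
  by rewrite /h => /negbTE ->; under eq_bigr do rewrite mulr1; apply: contact_wt_sum1.
under eq_bigr do rewrite -hE.
rewrite sum_wt_prod (bigD1 v0) //= [X in _ * X]big1 => [|v /sum_hE //].
rewrite mulr1.
by apply: eq_bigr => y _; rewrite /h eqxx.
Qed.

Lemma wt_neq0_contacts S c : wt R e S c != 0 -> contacts_nbrs e S c.
Proof.
move=> nz x xS; apply: contraTT nz => ex; rewrite negbK /wt.
by apply/prodf_eq0; exists x => //; rewrite /contact_wt (negbTE xS) (negbTE ex) mul0r.
Qed.

Lemma selwt_ge0 (S : {set T}) c s : 0 <= selwt R S c s.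
Proof. by apply: prodr_ge0 => v _; case: ifP. Qed.

Lemma selwt_sum1 (S : {set T}) c : \sum_s selwt R S c s = 1.
Proof.
pose G w y : R := if (w \in S) && (0 < #|req S c w|)%N
  then (y \in req S c w)%:R / #|req S c w|%:R else (y == w)%:R.
rewrite (eq_bigr (fun s : {ffun T -> T} => \prod_w G w (s w))) //.
rewrite -bigA_distr_bigA /=; apply: big1 => w _; rewrite /G.
case: andP => [[_ reqw]|_]; last by rewrite (bigD1 w) //= eqxx big1 ?addr0 // => y /negbTE ->.
by rewrite -mulr_suml sum_indicator divff // pnatr_eq0 -lt0n.
Qed.

Lemma selwt_neq0_req (S : {set T}) c s : selwt R S c s != 0 ->
  forall w, w \in S -> (0 < #|req S c w|)%N -> s w \in req S c w.
Proof.
move=> nz w wS reqw; apply: contraTT nz => sw; rewrite negbK.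
by rewrite /selwt; apply/prodf_eq0; exists w => //; rewrite wS reqw /= (negbTE sw) mul0r.
Qed.

End Round.

Lemma pull_step_grows (T : finType) (S : {set T}) (c : {ffun T -> T}) :
  grows_via S c (pull_step S c).
Proof.
split=> [x xS|x]; first by rewrite inE xS.
by rewrite !inE => /orP[->//|/andP[_ ->]].
Qed.

Lemma rpull_step_grows (T : finType) (S : {set T}) (c sel : {ffun T -> T}) :
  (forall w, w \in S -> (0 < #|req S c w|)%N -> sel w \in req S c w) ->
  grows_via S c (rpull_step S c sel).
Proof.
move=> sel_req; split=> [x xS|x]; first by rewrite inE xS.
rewrite inE => /orP[->//|/imsetP[w]]; rewrite inE => /andP[wS reqw] ->.
by have := sel_req w wS reqw; rewrite inE => /andP[_ /eqP->].
Qed.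

Lemma adv_sel_req (T : finType) (S : {set T}) (c s : {ffun T -> T}) w :
  (0 < #|req S c w|)%N -> adv_sel S c s w \in req S c w.
Proof.
move=> reqw; rewrite /adv_sel ffunE; case: ifP => // _.
case: pickP => [y -> //|none]; move: reqw; rewrite card_gt0 => /set0Pn[y yr].
by move: (none y); rewrite yr.
Qed.

(** * Potentials *)

Lemma ler_sum_except (R : numDomainType) (n : nat) (f g : 'I_n -> R) (i0 : 'I_n) (d : R) :
  (forall i, i != i0 -> f i <= g i) -> f i0 <= g i0 + d -> \sum_i f i <= \sum_i g i + d.
Proof.
move=> fg fg0; rewrite (bigD1 i0) // [X in _ <= X + _](bigD1 i0) //= addrAC.
by apply: lerD => //; apply: ler_sum => i /fg.
Qed.

Section Potentials.
Variables (R : realType) (T : finType) (e : rel T) (r u : T) (s : seq T).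
Hypotheses (tree_e : is_tree e) (path_ru : simple_path e r s u).

Local Notation k := (size s).
Local Notation v := (pathv r s).

(* The expected time for Pull to cross the edge into v (i+1) is its degree. *)
Definition deg_pot (S : {set T}) : R :=
  \sum_(i < k) (v i.+1 \notin S)%:R * (deg e (v i.+1))%:R.

(* An adversary may select one of these instead of v i.+1, but each such
   round informs one of them. *)
Definition spare_nbrs (i : nat) (S : {set T}) : {set T} :=
  [set x | e (v i) x & (x \notin S) && (x != v i.+1)].

Definition adv_pot (S : {set T}) : R :=
  \sum_(i < k) (v i.+1 \notin S)%:R * ((deg e (v i.+1))%:R + #|spare_nbrs i S|%:R).

Lemma deg_pot_ge0 S : 0 <= deg_pot S.
Proof. by apply: sumr_ge0 => i _; rewrite mulr_ge0. Qed.

Lemma adv_pot_ge0 S : 0 <= adv_pot S.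
Proof. by apply: sumr_ge0 => i _; rewrite mulr_ge0 ?addr_ge0. Qed.

Lemma Dpath_split : Dpath e r s = (deg e r + \sum_(i < k) deg e (v i.+1))%N.
Proof. by rewrite /Dpath big_cons (big_nth r) big_mkord. Qed.

Lemma sum_deg_pathv_le_Dpath : (\sum_(i < k) deg e (v i) <= Dpath e r s)%N.
Proof. by rewrite /Dpath (big_nth r) big_mkord /= big_ord_recr leq_addr. Qed.

Lemma deg_pot_init : deg_pot [set r] = (Dpath e r s - deg e r)%:R.
Proof.
rewrite Dpath_split addKn natr_sum; apply: eq_bigr => i _.
have : v i.+1 != v 0 by apply: (pathv_neq path_ru); have := ltn_ord i; lia.
by rewrite inE => /negbTE ->; rewrite mul1r.
Qed.

Lemma adv_pot_init : adv_pot [set r] <= 2 * (Dpath e r s)%:R.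
Proof.
apply: (@le_trans _ _ (\sum_(i < k) ((deg e (v i.+1))%:R + (deg e (v i))%:R))).
  apply: ler_sum => i _; case: (_ \notin _); rewrite ?mul1r ?mul0r ?addr_ge0 //.
  rewrite lerD2l ler_nat; apply: subset_leq_card.
  by apply/fintype.subsetP => x; rewrite !inE => /andP[].
rewrite big_split /= -!natr_sum mulr2n mulrDl mul1r.
by apply: lerD; rewrite ler_nat ?sum_deg_pathv_le_Dpath // Dpath_split leq_addl.
Qed.

Lemma deg_pot_le S :
  path_inv e r s S -> deg_pot S <= (Dpath e r s)%:R * (u \notin S)%:R.
Proof.
move=> IS; case uS: (u \in S) => /=.
  rewrite mulr0 /deg_pot big1 // => i _.
  by rewrite (path_inv_informed path_ru IS uS) ?mul0r //; have := ltn_ord i; lia.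
rewrite mulr1; apply: (@le_trans _ _ (\sum_(i < k) (deg e (v i.+1))%:R)).
  by apply: ler_sum => i _; case: (_ \notin _); rewrite ?mul1r ?mul0r.
by rewrite -natr_sum ler_nat Dpath_split leq_addl.
Qed.

Section Frontier.
Variables (S : {set T}) (c : {ffun T -> T}) (j : nat).
Hypotheses (IS : path_inv e r s S) (fj : frontier r s S j) (cS : contacts_nbrs e S c).

Let jk : (j.-1 < k)%N. Proof. by case: fj => /andP[j0 jk] _; lia. Qed.
Let jS : (j.-1).+1 = j. Proof. by case: fj => /andP[j0 _] _; rewrite prednK. Qed.
Let succ_neq_j (i : 'I_k) : i != Ordinal jk -> i.+1 != j.
Proof. by rewrite -val_eqE /=; apply: contraNN => /eqP <-. Qed.

Lemma deg_pot_step_ge S' : grows_via S c S' ->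
  deg_pot S <= deg_pot S' + (deg e (v j))%:R * (c (v j) == v j.-1)%:R.
Proof.
move=> grow; have [same viaj] := frontier_step tree_e path_ru IS cS grow fj.
apply: (ler_sum_except (i0 := Ordinal jk)) => [i /succ_neq_j ne|] /=.
  by rewrite same // ltn_ord.
rewrite jS (frontier_notin fj) mul1r.
case vS': (v j \in S') => /=; last by rewrite mul1r lerDl mulr_ge0.
by rewrite (viaj vS') eqxx mul0r add0r mulr1.
Qed.

Lemma deg_pot_pull_step_le :
  deg_pot (pull_step S c) + (deg e (v j))%:R * (c (v j) == v j.-1)%:R <= deg_pot S.
Proof.
have [same _] := frontier_step tree_e path_ru IS cS (pull_step_grows S c) fj.
rewrite -lerBrDr; apply: (ler_sum_except (i0 := Ordinal jk)) => [i /succ_neq_j ne|] /=.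
  by rewrite same // ltn_ord.
rewrite jS (frontier_notin fj) mul1r.
case: eqP => [cj|_]; last by rewrite mulr0 subr0; case: (_ \notin _); rewrite ?mul1r ?mul0r.
have -> : v j \in pull_step S c.
  by rewrite !inE (negbTE (frontier_notin fj)) cj (frontier_pred_in fj) orbT.
by rewrite mul0r mulr1 subrr.
Qed.

Definition sole_contact : bool :=
  [forall x, if x == v j then c x == v j.-1 else (x \in S) || (c x != v j.-1)].

Definition no_contact : bool := [forall x, (x \in S) || (c x != v j.-1)].

Variable sel : {ffun T -> T}.
Hypothesis sel_req : forall w, w \in S -> (0 < #|req S c w|)%N -> sel w \in req S c w.

Local Notation S' := (rpull_step S c sel).

Let spare_nbrs_sub i : spare_nbrs i S' \subset spare_nbrs i S.
Proof.
apply/fintype.subsetP => y; rewrite !inE => /andP[-> /andP[yS' ->]]; rewrite andbT.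
by apply: contra yS' => ->.
Qed.

Let parent_served x : x \notin S -> c x = v j.-1 ->
  sel (v j.-1) \in S' /\ sel (v j.-1) \notin S /\ c (sel (v j.-1)) = v j.-1.
Proof.
move=> xS cx; have wS := frontier_pred_in fj.
have reqw : (0 < #|req S c (v j.-1)|)%N.
  by rewrite card_gt0; apply/set0Pn; exists x; rewrite inE xS cx eqxx.
split; first by rewrite inE imset_f ?orbT // inE wS reqw.
by have := sel_req wS reqw; rewrite inE => /andP[-> /eqP].
Qed.

Lemma sole_contact_informed : sole_contact -> v j \in S'.
Proof.
move=> /forallP sole; have := sole (v j); rewrite eqxx => /eqP cj.
have [inS' [nS csel]] := parent_served (frontier_notin fj) cj.
have := sole (sel (v j.-1)); case: eqP => [<- //|_].
by rewrite (negbTE nS) csel eqxx.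
Qed.

Lemma spare_nbrs_proper : ~~ no_contact -> v j \notin S' ->
  spare_nbrs j.-1 S' \proper spare_nbrs j.-1 S.
Proof.
move=> /forallPn[x]; rewrite negb_or negbK => /andP[xS /eqP cx] vjS'.
have [inS' [nS csel]] := parent_served xS cx.
apply/fintype.properP; split; first exact: spare_nbrs_sub.
exists (sel (v j.-1)); last by rewrite inE inS' andbF.
have edge : e (v j.-1) (sel (v j.-1)) by rewrite tree_sym // -[X in e _ X]csel cS.
rewrite inE nS edge jS /=.
by apply: contraNneq vjS' => <-.
Qed.

(* If v j gets informed, the frontier term of at least deg (v j) vanishes;
   otherwise, if somebody contacted v j.-1, the requester selected by v j.-1
   is a spare neighbour and gets informed. *)
Lemma adv_pot_rpull_step_le :
  adv_pot S' + (((deg e (v j))%:R - 1) * sole_contact%:R + (~~ no_contact)%:R) <= adv_pot S.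
Proof.
have [same _] := frontier_step tree_e path_ru IS cS (rpull_step_grows sel_req) fj.
have d1 : 1 <= (deg e (v j))%:R :> R.
  rewrite ler1n /deg card_gt0; apply/set0Pn; exists (v j.-1).
  by rewrite inE (frontier_edge tree_e path_ru fj).
rewrite -lerBrDr; apply: (ler_sum_except (i0 := Ordinal jk)) => [i /succ_neq_j ne|] /=.
  rewrite same ?ltn_ord //; case: (_ \notin _); rewrite ?mul0r // !mul1r lerD2l.
  by rewrite ler_nat subset_leq_card.
rewrite jS (frontier_notin fj) mul1r.
case vS': (v j \in S') => /=.
  rewrite mul0r subr_ge0; apply: (@le_trans _ _ ((deg e (v j))%:R - 1 + 1)); last first.
    by rewrite subrK lerDl.
  by apply: lerD; case: sole_contact; case: no_contact; rewrite ?mulr1 ?mulr0 ?subr_ge0.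
rewrite (contraFF sole_contact_informed vS').
rewrite mulr0 add0r mul1r; case nc: no_contact => /=.
  by rewrite subr0 lerD2l ler_nat subset_leq_card.
rewrite lerBrDr -addrA lerD2l -natrD ler_nat addn1.
by apply: proper_card; apply: spare_nbrs_proper; rewrite ?nc ?vS'.
Qed.

End Frontier.

End Potentials.

(** * Expected survival times *)

Section PullLikeRounds.
Variables (R : realType) (T : finType) (e : rel T) (r u : T) (s : seq T).
Hypotheses (tree_e : is_tree e) (ur : u != r) (path_ru : simple_path e r s u).

Local Notation v := (pathv r s).

Let deg_pos x : (0 < deg e x)%N. Proof. exact: deg_gt0 tree_e x ur. Qed.

Lemma expect_parent_contact S j : frontier r s S j ->
  \sum_c wt R e S c * ((deg e (v j))%:R * (c (v j) == v j.-1)%:R) = 1.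
Proof.
move=> fj.
rewrite (sum_wt_marginal deg_pos _ _ (fun y => (deg e (v j))%:R * (y == v j.-1)%:R)).
rewrite (bigD1 (v j.-1)) //= big1 => [|y /negbTE ->]; last by rewrite !mulr0.
have edge := frontier_edge tree_e path_ru fj.
rewrite eqxx mulr1 addr0 (contact_wt_edge R (frontier_notin fj) edge).
by rewrite mulVf // pnatr_eq0 -lt0n.
Qed.

(* Both probabilities factor through Q, the probability that no uninformed
   node other than v j contacts v j.-1. *)
Lemma expect_adv_gain S j : frontier r s S j ->
  \sum_c wt R e S c * (((deg e (v j))%:R - 1) * (sole_contact r s S c j)%:R +
                       (~~ no_contact r s S c j)%:R) = 1.
Proof.
move=> fj; set w := v j.-1; set d : R := (deg e (v j))%:R.
have dn : d != 0 by rewrite pnatr_eq0 -lt0n.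
have Wvw : contact_wt R e S (v j) w = d^-1.
  by rewrite (contact_wt_edge R (frontier_notin fj) (frontier_edge tree_e path_ru fj)).
pose Q := \prod_(x | x != v j) \sum_y contact_wt R e S x y * ((x \in S) || (y != w))%:R.
have P_sole : \sum_c wt R e S c * (sole_contact r s S c j)%:R = d^-1 * Q.
  rewrite (sum_wt_forall _ _ _
    (fun x y => if x == v j then y == w else (x \in S) || (y != w))).
  rewrite (bigD1 (v j)) //= eqxx; congr (_ * _).
    rewrite (bigD1 w) //= eqxx mulr1 big1 ?addr0 // => y /negbTE ->.
    by rewrite mulr0.
  by apply: eq_bigr => x /negbTE ->.
have P_none : \sum_c wt R e S c * (no_contact r s S c j)%:R = (1 - d^-1) * Q.
  rewrite (sum_wt_forall _ _ _ (fun x y => (x \in S) || (y != w))).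
  rewrite (bigD1 (v j)) //= (negbTE (frontier_notin fj)) /=; congr (_ * _).
  rewrite -Wvw -[in RHS](contact_wt_sum1 R deg_pos S (v j)) [in RHS](bigD1 w) //=.
  rewrite addrAC subrr add0r.
  rewrite [X in X = _](bigD1 w) //= eqxx mulr0 add0r.
  by apply: eq_bigr => y /negbTE ->; rewrite mulr1.
have -> : \sum_c wt R e S c * ((d - 1) * (sole_contact r s S c j)%:R +
                              (~~ no_contact r s S c j)%:R)
    = (d - 1) * (d^-1 * Q) + (1 - (1 - d^-1) * Q).
  rewrite -P_sole -P_none -[X in _ + (X - _)](wt_sum1 R deg_pos S).
  rewrite mulr_sumr -sumrB -big_split /=; apply: eq_bigr => c _.
  by case: (no_contact _ _ _ _ _); rewrite /= ?mulr1 ?mulr0 ?subr0 ?subrr; ring.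
by field.
Qed.

(* A round in which every node makes the contact choice of Pull and the
   newly informed nodes learn the rumour from their contacts; the state may
   carry more than the informed set. *)
Variables (X : Type) (I : finType) (informed : X -> {set T}) (mu : X -> I -> R)
  (contact : I -> {ffun T -> T}) (step : X -> I -> X).
Hypothesis mu_ge0 : forall x i, 0 <= mu x i.
Hypothesis mu_contact : forall x (F : {ffun T -> T} -> R),
  \sum_i mu x i * F (contact i) = \sum_c wt R e (informed x) c * F c.
Hypothesis mu_neq0_contacts :
  forall x i, mu x i != 0 -> contacts_nbrs e (informed x) (contact i).
Hypothesis step_grows : forall x i, mu x i != 0 ->
  grows_via (informed x) (contact i) (informed (step x i)).

Local Notation inv := (fun x => path_inv e r s (informed x)).
Local Notation alive := (fun x => u \notin informed x).

Lemma mu_sum1 x : \sum_i mu x i = 1.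
Proof.
have := mu_contact x (fun _ => 1); under eq_bigr do rewrite mulr1.
by move=> ->; under eq_bigr do rewrite mulr1; apply: wt_sum1.
Qed.

Lemma inv_step x i : inv x -> mu x i != 0 -> inv (step x i).
Proof.
by move=> Ix nz; have := path_inv_step tree_e path_ru Ix (mu_neq0_contacts nz) (step_grows nz).
Qed.

Lemma alive_step x i : inv x -> mu x i != 0 -> alive (step x i) -> alive x.
Proof. by move=> _ /step_grows[sub _]; apply: contra; apply: sub. Qed.

Local Notation surv_sum := (surv_sum mu step alive).

Lemma deg_pot_le_surv_sum x : inv x ->
  deg_pot R e r s (informed x) <= 2 * surv_sum (Dpath e r s).+1 x.
Proof.
apply: (potential_le_surv_sum mu_ge0 (fun x _ => mu_sum1 x) inv_step alive_step
  (Psi := fun x => deg_pot R e r s (informed x))) => [y Iy|y Iy uy] /=.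
  exact: (deg_pot_le R path_ru Iy).
have [j fj] := exists_frontier path_ru Iy uy.
rewrite -(expect_parent_contact fj) -mu_contact -big_split /=.
under eq_bigr do rewrite -mulrDr.
apply: ler_avg (mu_ge0 y) (mu_sum1 y) _ => i nz.
rewrite addrC.
exact: (deg_pot_step_ge R tree_e path_ru Iy fj (mu_neq0_contacts nz) (step_grows nz)).
Qed.

Lemma ET_surv_ge x0 : informed x0 = [set r] ->
  ((1 / 2 * (Dpath e r s - deg e r)%:R)%:E <= ET (fun t => surv mu step alive t x0))%E.
Proof.
move=> x0r.
apply: le_trans (ET_ge_partial_sum (Dpath e r s).+1 (surv_ge0 step alive mu_ge0 ^~ x0)).
have := deg_pot_le_surv_sum (x := x0); rewrite x0r (deg_pot_init R path_ru).
by rewrite lee_fin /surv_sum => /(_ (path_inv_init tree_e path_ru)); lra.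
Qed.

(* The upper bounds only need the drift of Phi to be paid for by a gain g
   of expectation one, which may depend on the frontier. *)
Lemma ET_surv_le (Phi : {set T} -> R) (g : nat -> {set T} -> {ffun T -> T} -> R) x0 :
  (forall S, 0 <= Phi S) ->
  (forall S j, frontier r s S j -> \sum_c wt R e S c * g j S c = 1) ->
  (forall x i j, path_inv e r s (informed x) -> frontier r s (informed x) j ->
     mu x i != 0 ->
     Phi (informed (step x i)) + g j (informed x) (contact i) <= Phi (informed x)) ->
  informed x0 = [set r] ->
  (ET (fun t => surv mu step alive t x0) <= (Phi [set r])%:E)%E.
Proof.
move=> Phi0 Eg drift x0r.
have drift_avg x : inv x -> alive x ->
    1 + \sum_i mu x i * Phi (informed (step x i)) <= Phi (informed x).
  move=> Ix ux; have [j fj] := exists_frontier path_ru Ix ux.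
  rewrite -(Eg _ _ fj) -mu_contact -big_split /=.
  under eq_bigr do rewrite -mulrDr.
  apply: avg_ler (mu_ge0 x) (mu_sum1 x) _ => i nz.
  by rewrite addrC; apply: drift.
apply: ET_le_bound => [t|N]; first exact: surv_ge0.
have := surv_sum_le_potential mu_ge0 inv_step alive_step
  (fun x _ => Phi0 (informed x)) drift_avg N (x := x0).
by rewrite x0r => /(_ (path_inv_init tree_e path_ru)).
Qed.

End PullLikeRounds.

Section Processes.
Variables (R : realType) (T : finType) (e : rel T) (r u : T) (s : seq T).
Hypotheses (tree_e : is_tree e) (ur : u != r) (path_ru : simple_path e r s u).

Local Notation v := (pathv r s).
Local Notation alive := (fun S : {set T} => u \notin S).

Lemma pull_survE t S : pull_surv R e u t S = surv (wt R e) (@pull_step T) alive t S.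
Proof. by elim: t S => [|t IH] S //=; apply: eq_bigr => c _; rewrite IH. Qed.

Lemma E_pull_bounds :
  ((1 / 2 * (Dpath e r s - deg e r)%:R)%:E <= E_pull R e r u)%E /\
  (E_pull R e r u <= (Dpath e r s - deg e r)%:R%:E)%E.
Proof.
have -> : E_pull R e r u = ET (fun t => surv (wt R e) (@pull_step T) alive t [set r]).
  by congr ET; apply: boolp.funext => t; rewrite pull_survE.
have mu_contact S F : \sum_c wt R e S c * F (id c) = \sum_c wt R e (id S) c * F c by [].
have pull_grows S c : wt R e S c != 0 -> grows_via S c (pull_step S c).
  by move=> _; apply: pull_step_grows.
split; first exact: (ET_surv_ge tree_e ur path_ru (wt_ge0 R e) mu_contact
  (@wt_neq0_contacts R T e) pull_grows (x0 := [set r]) erefl).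
rewrite -(deg_pot_init R path_ru).
apply: (ET_surv_le tree_e ur path_ru (wt_ge0 R e) mu_contact (@wt_neq0_contacts R T e)
  pull_grows (Phi := deg_pot R e r s) (x0 := [set r])
  (g := fun j S c => (deg e (v j))%:R * (c (v j) == v j.-1)%:R)) => //.
- exact: deg_pot_ge0.
- by move=> S j fj; apply: (expect_parent_contact R tree_e ur path_ru fj).
- move=> S c j IS fj nz.
  exact: (deg_pot_pull_step_le R tree_e path_ru IS fj (wt_neq0_contacts nz)).
Qed.

Definition rpull_wt (S : {set T}) (cs : {ffun T -> T} * {ffun T -> T}) : R :=
  wt R e S cs.1 * selwt R S cs.1 cs.2.

Let rpull_next (S : {set T}) (cs : {ffun T -> T} * {ffun T -> T}) := rpull_step S cs.1 cs.2.

Lemma rrpull_survE t S : rrpull_surv R e u t S = surv rpull_wt rpull_next alive t S.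
Proof.
elim: t S => [|t IH] S //=; rewrite pair_bigA /=.
by apply: eq_bigr => cs _; rewrite IH.
Qed.

Lemma rpull_wt_contact S (F : {ffun T -> T} -> R) :
  \sum_cs rpull_wt S cs * F cs.1 = \sum_c wt R e S c * F c.
Proof.
rewrite -(pair_bigA _ (fun c sl => rpull_wt S (c, sl) * F c)) /=.
apply: eq_bigr => c _; rewrite /rpull_wt /=.
by rewrite -mulr_suml -mulr_sumr selwt_sum1 mulr1.
Qed.

Lemma E_rrpull_ge : ((1 / 2 * (Dpath e r s - deg e r)%:R)%:E <= E_rrpull R e r u)%E.
Proof.
have -> : E_rrpull R e r u = ET (fun t => surv rpull_wt rpull_next alive t [set r]).
  by congr ET; apply: boolp.funext => t; rewrite rrpull_survE.
have mu_ge0 S cs : 0 <= rpull_wt S cs by rewrite mulr_ge0 ?wt_ge0 ?selwt_ge0.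
apply: (ET_surv_ge tree_e ur path_ru mu_ge0 rpull_wt_contact _ _ (informed := id) erefl).
- by move=> S cs; rewrite mulf_eq0 negb_or => /andP[/wt_neq0_contacts].
- move=> S cs; rewrite mulf_eq0 negb_or => /andP[_ /selwt_neq0_req].
  exact: rpull_step_grows.
Qed.

Variable A : adversary T.

Local Notation state := (seq {ffun T -> T} * {set T})%type.

Let adv_next (x : state) (c : {ffun T -> T}) :=
  (rcons x.1 c, rpull_step x.2 c (adv_sel x.2 c (A (rcons x.1 c)))).

Lemma arpull_survE t h S : arpull_surv R e u A t h S =
  surv (fun x : state => wt R e x.2) adv_next (fun x => u \notin x.2) t (h, S).
Proof. by elim: t h S => [|t IH] h S //=; apply: eq_bigr => c _; rewrite IH. Qed.

Lemma E_arpull_bounds :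
  ((1 / 2 * (Dpath e r s - deg e r)%:R)%:E <= E_arpull R e r u A)%E /\
  (E_arpull R e r u A <= (2 * (Dpath e r s)%:R)%:E)%E.
Proof.
have -> : E_arpull R e r u A =
    ET (fun t => surv (fun x => wt R e x.2) adv_next (fun x => u \notin x.2) t ([::], [set r])).
  by congr ET; apply: boolp.funext => t; rewrite arpull_survE.
have mu_contact (x : state) F : \sum_c wt R e x.2 c * F (id c) = \sum_c wt R e x.2 c * F c by [].
have adv_grows (x : state) c : wt R e x.2 c != 0 -> grows_via x.2 c (adv_next x c).2.
  by move=> _; apply: rpull_step_grows => w _; apply: adv_sel_req.
have mu_ge0 (x : state) c : 0 <= wt R e x.2 c by apply: wt_ge0.
have mu_contacts (x : state) c : wt R e x.2 c != 0 -> contacts_nbrs e x.2 c.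
  exact: wt_neq0_contacts.
split; first exact: (ET_surv_ge tree_e ur path_ru mu_ge0 mu_contact mu_contacts adv_grows
  (x0 := ([::], [set r])) erefl).
apply: (@le_trans _ _ (adv_pot R e r s [set r])%:E); last by rewrite lee_fin adv_pot_init.
apply: (ET_surv_le tree_e ur path_ru mu_ge0 mu_contact mu_contacts adv_grows
  (Phi := adv_pot R e r s) (x0 := ([::], [set r]))
  (g := fun j S c => ((deg e (v j))%:R - 1) * (sole_contact r s S c j)%:R +
                     (~~ no_contact r s S c j)%:R)) => //.
- exact: adv_pot_ge0.
- by move=> S j fj; apply: (expect_adv_gain R tree_e ur path_ru fj).
- move=> x c j IS fj nz.
  apply: (adv_pot_rpull_step_le R tree_e path_ru IS fj (mu_contacts _ _ nz)).
  by move=> w _; apply: adv_sel_req.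
Qed.

End Processes.

Theorem lemma1 (R : realType) :
  (* (1) PULL: E[tau] = Theta(D_p - d_r) *)
  (exists c1 c2 : R, 0 < c1 /\ 0 < c2 /\
     forall (T : finType) (e : rel T) (r u : T) (s : seq T),
       is_tree e -> u != r -> simple_path e r s u ->
       ((c1 * (Dpath e r s - deg e r)%:R)%:E <= E_pull R e r u)%E /\
       (E_pull R e r u <= (c2 * (Dpath e r s - deg e r)%:R)%:E)%E)
  /\
  (* (2) every RPULL (random, and adversarial for every adversary): Omega(D_p - d_r) *)
  (exists c : R, 0 < c /\
     forall (T : finType) (e : rel T) (r u : T) (s : seq T),
       is_tree e -> u != r -> simple_path e r s u ->
       ((c * (Dpath e r s - deg e r)%:R)%:E <= E_rrpull R e r u)%E /\
       (forall A : adversary T,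
          ((c * (Dpath e r s - deg e r)%:R)%:E <= E_arpull R e r u A)%E))
  /\
  (* (3) adversarial RPULL, every adversary: O(D_p) *)
  (exists c : R, 0 < c /\
     forall (T : finType) (e : rel T) (r u : T) (s : seq T),
       is_tree e -> u != r -> simple_path e r s u ->
       forall A : adversary T,
         (E_arpull R e r u A <= (c * (Dpath e r s)%:R)%:E)%E).
Proof.
have half_gt0 : (0 : R) < 1 / 2 by rewrite divr_gt0.
split; first exists (1 / 2), 1.
  split=> //; split=> // T e r u s tree_e ur path_ru.
  by have [lb ub] := E_pull_bounds R tree_e ur path_ru; rewrite [1 * _%:R]mul1r.
split; first exists (1 / 2).
  split=> // T e r u s tree_e ur path_ru; split; first exact: (E_rrpull_ge R tree_e ur path_ru).
  by move=> A; case: (E_arpull_bounds R tree_e ur path_ru A).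
exists 2; split=> // T e r u s tree_e ur path_ru A.
by case: (E_arpull_bounds R tree_e ur path_ru A).
Qed.
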